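(* Let $d\ge 1$, $0<\alpha\le 1$ and $M>1$. For the online hitting set problem in which the point set is $\mathbb{Z}^d$ and the objects are $\alpha$-fat objects in $\mathbb{R}^d$ with widths in the range $[1,M]$, the deterministic online algorithm $\mathrm{ANC}$ described below achieves a competitive ratio of at most $\lfloor \frac{2}{\alpha}+2\rfloor^d\left(\lfloor\log_2 M\rfloor+1\right)$.
   Context: Online hitting set problem: the point set is known in advance; objects arrive one by one; upon each arrival the algorithm must ensure its current solution (points can only be added, never removed) contains a point of every object presented so far. The competitive ratio is the supremum over input sequences of the size of the algorithm's solution divided by the minimum size of an offline hitting set of the sequence. An object is a compact subset of $\mathbb{R}^d$ with non-empty interior; $\partial\sigma$ is its boundary. All distances $d_\infty$ are $L_\infty$ distances. For $x\in\sigma$ let $\alpha(x)=\min_{y\in\partial\sigma}d_\infty(x,y)/\max_{y\in\partial\sigma}d_\infty(x,y)$ and $\alpha(\sigma)=\max_{x\in\sigma}\alpha(x)$; $\sigma$ is $\alpha$-fat if $\alpha(\sigma)\ge\alpha$. A center of $\sigma$ is a point $c\in\sigma$ with $\alpha(c)=\alpha(\sigma)$ (if several, one is fixed arbitrarily); the width of $\sigma$ is $\min_{y\in\partial\sigma}d_\infty(c,y)$. Algorithm $\mathrm{ANC}$: when an object $\sigma$ with center $c$ and width $w$ arrives, if it contains a point of the current solution do nothing. Otherwise let $i=\lfloor\log_2 w\rfloor$; for each $j\in[d]$ write uniquely $c(x_j)=z_j+f_j$ with $z_j\in 2^{i+1}\mathbb{Z}$ and $f_j\in[0,2^{i+1})$,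 and define the point $r$ by $r(x_j)=z_j$ if $f_j\in[0,2^i)$ and $r(x_j)=z_j+2^{i+1}$ if $f_j\in[2^i,2^{i+1})$; add $r$ (a point of $(2^{i+1}\mathbb{Z})^d\subseteq\mathbb{Z}^d$) to the solution. *)

From HB Require Import structures.
From mathcomp Require Import all_boot all_order all_algebra.
From mathcomp Require Import all_classical all_reals all_analysis.
Set Implicit Arguments. Unset Strict Implicit. Unset Printing Implicit Defensive.
Import Order.TTheory GRing.Theory Num.Theory.
Import numFieldNormedType.Exports.
Local Open Scope classical_set_scope.
Local Open Scope ring_scope.

Section Defs.
Variables (R : realType) (d : nat).
Local Notation V := 'rV[R]_d.

(* L_infinity distance: the canonical norm on 'rV[R]_d is the max norm
   (mx_norm), and the topology on 'rV[R]_d is the one it induces. *)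
Definition dinf (x y : V) : R := `|x - y|.

Definition bd (s : set V) : set V := closure s `\` interior s.

Definition is_object (s : set V) : Prop := compact s /\ interior s !=set0.

Definition alpha_pt (s : set V) (x : V) : R :=
  inf [set dinf x y | y in bd s] / sup [set dinf x y | y in bd s].

Definition alpha_obj (s : set V) : R := sup [set alpha_pt s x | x in s].

Definition fat (a : R) (s : set V) : Prop := a <= alpha_obj s.

Definition is_center (s : set V) (c : V) : Prop :=
  s c /\ alpha_pt s c = alpha_obj s.

Definition width (s : set V) (c : V) : R := inf [set dinf c y | y in bd s].

Definition log2 (x : R) : R := ln x / ln 2.

Definition anc_point (c : V) (w : R) : V :=
  let i : int := Num.floor (log2 w) in
  let s : R := (2 : R) ^ (i + 1) in
  \row_j (let z := s * (Num.floor (c ord0 j / s))%:~R in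
          let f := c ord0 j - z in
          if f < (2 : R) ^ i then z else z + s).

(* one step of ANC; ctr fixes the center of every object *)
Definition anc_step (ctr : set V -> V) (sol : seq V) (s : set V) : seq V :=
  if `[< exists2 p, p \in sol & s p >] then sol
  else anc_point (ctr s) (width s (ctr s)) :: sol.

Definition anc_run (ctr : set V -> V) (objs : seq (set V)) : seq V :=
  foldl (anc_step ctr) [::] objs.

Definition zpt (p : 'rV[int]_d) : V := map_mx (fun z : int => z%:~R) p.

Definition hitting_set (objs : seq (set V)) (H : seq 'rV[int]_d) : Prop :=
  forall s, s \in objs -> exists2 p, p \in H & s (zpt p).

End Defs.

(* Charge each point r that ANC places for an object s, with center c, width w
   and level k = floor (log2 w), to a point p of the hitting set H lying in s.
   The ray from c through p leaves s at a boundary point at least as far from c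
   as p, so fatness gives |c - p| <= w / a < 2^(k+1) / a.  As r lies on the grid
   (2^(k+1) Z)^d within 2^k of c, each coordinate of r is one of the
   floor (2/a + 2) multiples of 2^(k+1) within 2^(k+1) (1/2 + 1/a) of p.  So r is
   determined by p, by k <= floor (log2 M) and by a vector of offsets, which
   bounds the number of distinct points ANC ever places. *)

From HB Require Import structures.
From mathcomp Require Import all_boot all_order all_algebra.
From mathcomp Require Import all_classical all_reals all_analysis.
From mathcomp Require Import ring lra.
Set Implicit Arguments. Unset Strict Implicit. Unset Printing Implicit Defensive.
Import Order.TTheory GRing.Theory Num.Theory.
Import numFieldNormedType.Exports.
Local Open Scope classical_set_scope.
Local Open Scope ring_scope.

Lemma ler_mx_entry_norm (R : realType) m n (A : 'M[R]_(m, n)) i j : `|A i j| <= `|A|.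
Proof. by rewrite [`|A|]mx_normrE; exact: (le_bigmax _ _ (i, j)). Qed.

Section segment_boundary.
Context {R : realType} {V : normedModType R}.

Lemma segment_meets_boundary (s : set V) (u x : V) :
  closed s -> s u -> ~ s x ->
  exists2 t : R, 0 <= t < 1 & (closure s `\` interior s) (u + t *: (x - u)).
Proof.
move=> cs su nsx.
pose g t : V := u + t *: (x - u).
have g_cont : continuous g.
  move=> t; have := @continuousD _ _ R (cst u) (fun r => r *: (x - u)) t.
  by apply; [exact: cst_continuous | exact: continuousZr_tmp].
pose A := `[0, 1] `&` g @^-1` s.
have A0 : A 0.
  split; first by rewrite /= in_itv /= lexx ler01.
  by rewrite /= /g scale0r addr0.
have supA : has_sup A by split; [exists 0 | exists 1 => t [/=]; rewrite in_itv => /andP[]].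
have t0A : A (sup A).
  apply: itv_closed_supremums; first by exists 0.
    apply: closedI; first exact: itv_closed.
    exact: (continuous_closedP g).1.
  split; first exact: sup_upper_bound.
  by move=> y; apply: sup_le_ub; case: supA.
set t0 := sup A in t0A *.
have [t0_itv gt0s] := t0A.
move: t0_itv; rewrite /= in_itv /= => /andP[t0_ge0 t0_le1].
have t0_lt1 : t0 < 1.
  rewrite lt_neqAle t0_le1 andbT; apply: contra_notN nsx => /eqP t0_1.
  by move: gt0s; rewrite /g /= t0_1 scale1r addrC subrK.
exists t0; first by rewrite t0_ge0.
split; first exact: subset_closure.
move=> /(g_cont t0) /nbhs_ballP [e /= e_gt0 e_ball].
pose h := Num.min e (1 - t0) / 2.
have h_gt0 : 0 < h by rewrite divr_gt0 // lt_min e_gt0 subr_gt0.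
have [h_lt_e h_lt_1] : h < e /\ h < 1 - t0.
  by apply/andP; rewrite -lt_min ltr_pdivrMr // ltr_pMr ?ltr1n // lt_min e_gt0 subr_gt0.
have : A (t0 + h).
  split; first by rewrite /= in_itv /= addr_ge0 ?(ltW h_gt0) //=; lra.
  apply: e_ball; rewrite -ball_normE /= opprD addrA subrr add0r normrN gtr0_norm //.
by move=> /(sup_upper_bound supA); rewrite -/t0 gerDl leNgt h_gt0.
Qed.

Lemma compact_norm_le (s : set V) :
  compact s -> exists B : R, forall x, s x -> `|x| <= B.
Proof.
move=> /compact_bounded [B [_ HB]].
by exists (B + 1) => x sx; apply: (HB (B + 1)); rewrite ?ltrDl.
Qed.

Lemma compact_far_boundary_point (s : set V) (c p : V) :
  compact s -> s p -> p != c ->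
  exists2 q, (closure s `\` interior s) q & `|c - p| <= `|c - q|.
Proof.
move=> s_cpt sp pc.
have [B sB] := compact_norm_le s_cpt.
have s_closed : closed s by apply: compact_closed.
have pc_gt0 : 0 < `|p - c| by rewrite normr_gt0 subr_eq0.
pose k := (B + `|p| + 1) / `|p - c|.
have k_ge0 : 0 <= k by rewrite divr_ge0 // ?ltW //; have := sB p sp; have := normr_ge0 p; lra.
have outside : ~ s (p + k *: (p - c)).
  move=> /sB; apply/negP; rewrite -ltNge.
  have := ler_normB (p + k *: (p - c)) p; rewrite addrAC subrr add0r.
  rewrite normrZ ger0_norm // divfK ?gt_eqF //; lra.
have [t /andP[t_ge0 _] q_bd] := segment_meets_boundary s_closed sp outside.
exists (p + t *: (p + k *: (p - c) - p)) => //.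
rewrite addrAC subrr add0r scalerA.
have -> : c - (p + (t * k) *: (p - c)) = - ((1 + t * k) *: (p - c)).
  by rewrite scalerDl scale1r !opprD opprK addrA [c + _]addrC.
have tk_ge0 : 0 <= t * k := mulr_ge0 t_ge0 k_ge0.
by rewrite normrN normrZ distrC ger0_norm ?addr_ge0 // ler_peMl // lerDl.
Qed.

End segment_boundary.

Section fat_objects.
Context {R : realType} {d : nat}.
Local Notation V := 'rV[R]_d.

Lemma width_ge0 (s : set V) (c : V) : 0 <= width s c.
Proof.
rewrite /width; have [->|/set0P D_neq0] := eqVneq [set dinf c y | y in bd s] set0.
  by rewrite inf0.
by apply: lb_le_inf => // _ [y _ <-]; exact: normr_ge0.
Qed.

Lemma dinf_le_width_div (s : set V) (c p : V) (a : R) :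
  compact s -> 0 < a -> a <= alpha_pt s c -> s p -> dinf c p <= width s c / a.
Proof.
move=> s_cpt a_gt0 a_le sp.
have [->|pc] := eqVneq p c.
  by rewrite /dinf subrr normr0 divr_ge0 ?width_ge0 ?ltW.
have [q q_bd pq] := compact_far_boundary_point s_cpt sp pc.
have [B sB] := compact_norm_le s_cpt.
have s_closed : closed s by apply: compact_closed.
pose D := [set dinf c y | y in bd s].
have D_sup : has_sup D.
  split; first by exists (dinf c q), q.
  exists (`|c| + B) => _ [y [y_cl _] <-].
  have sy : s y by rewrite ((closure_id s).1 s_closed).
  by apply: le_trans (ler_normB _ _) _; rewrite lerD2l sB.
have p_le_sup : dinf c p <= sup D.
  by apply: le_trans pq (sup_upper_bound D_sup _); exists q.
have sup_gt0 : 0 < sup D.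
  by apply: lt_le_trans p_le_sup; rewrite /dinf normr_gt0 subr_eq0 eq_sym.
apply: le_trans p_le_sup _.
by rewrite ler_pdivlMr // mulrC -ler_pdivlMr //; exact: a_le.
Qed.

End fat_objects.

Section dyadic_levels.
Context {R : realType}.

Lemma ler_log2 (x y : R) : 0 < x -> x <= y -> log2 x <= log2 y.
Proof.
move=> x_gt0 xy; rewrite /log2 ler_pM2r ?invr_gt0 ?ln_gt0 ?ltr1n //.
by rewrite ler_ln // posrE (lt_le_trans x_gt0 xy).
Qed.

Lemma log2_ge0 (x : R) : 1 <= x -> 0 <= log2 x.
Proof. by move=> x_ge1; apply: divr_ge0; rewrite ln_ge0 // ler1n. Qed.

Lemma floor_log2_nat (w : R) : 1 <= w ->
  exists k : nat, Num.floor (log2 w) = k%:Z /\ w < 2 ^+ k.+1.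
Proof.
move=> w_ge1; have w_gt0 : 0 < w by apply: lt_le_trans w_ge1.
have ln2_gt0 : 0 < ln (2 : R) by rewrite ln_gt0 ?ltr1n.
have [k fl_k] : exists k : nat, Num.floor (log2 w) = k.
  by exists `|Num.floor (log2 w)|%N; rewrite gez0_abs // floor_ge0 log2_ge0.
exists k; split => //; have /andP[_] := floor_itv (log2 w).
rewrite fl_k /log2 ltr_pdivrMr // -ltr_ln ?posrE ?exprn_gt0 // lnXn //.
by rewrite -PoszD addn1 pmulrn mulr_natl.
Qed.

Lemma floor_window (m : int) (y b : R) : `|m%:~R - y| < b ->
  0 <= m - (Num.floor (y - b) + 1) < Num.floor (2 * b + 1).
Proof.
rewrite ltr_norml => /andP[lo hi]; have /andP[fl_le fl_gt] := floor_itv (y - b).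
apply/andP; split.
  by rewrite subr_ge0 -ltzD1 ltrD2r -(ltr_int R); lra.
rewrite -lezD1 opprD addrA subrK floor_ge_int intrB.
rewrite intrD in fl_gt; lra.
Qed.

End dyadic_levels.

Section anc_points.
Context {R : realType} {d : nat}.
Local Notation V := 'rV[R]_d.

Lemma anc_point_grid_near (c : V) (w : R) (k : nat) : Num.floor (log2 w) = k ->
  forall j, exists m : int, anc_point c w ord0 j = 2 ^+ k.+1 * m%:~R /\
    `|anc_point c w ord0 j - c ord0 j| <= 2 ^+ k.
Proof.
move=> fl_k j; rewrite /anc_point mxE fl_k -PoszD addn1 -!exprnP.
have S_gt0 : 0 < (2 : R) ^+ k.+1 by rewrite exprn_gt0.
have S_half : (2 : R) ^+ k.+1 = 2 ^+ k + 2 ^+ k by rewrite exprS mulr2n mulrDl mul1r.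
have /andP[] := floor_itv (c ord0 j / 2 ^+ k.+1).
set F := Num.floor _; rewrite ler_pdivlMr // ltr_pdivrMr // intrD mulrDl mul1r.
rewrite ![_ * 2 ^+ k.+1]mulrC => lo hi.
case: ifP => [near_lo | /negbT]; first by exists F; rewrite ler0_norm; lra.
by rewrite -leNgt => near_hi; exists (F + 1); rewrite intrD mulrDr mulr1 ger0_norm; lra.
Qed.

Lemma mem_anc_run (ctr : set V -> V) (objs : seq (set V)) r :
  r \in anc_run ctr objs ->
  exists2 s, s \in objs & r = anc_point (ctr s) (width s (ctr s)).
Proof.
rewrite /anc_run; move: [::] (negbT (in_nil r)); elim: objs => [|o os IH] sol r_notin /=.
  by rewrite (negbTE r_notin).
have [r_step|r_notin'] := boolP (r \in anc_step ctr sol o).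
  move=> _; exists o; first exact: mem_head.
  move: r_step; rewrite /anc_step; case: ifP => _; rewrite ?inE ?(negbTE r_notin) //.
  by rewrite orbF => /eqP.
by move=> /(IH _ r_notin') [s s_in ->]; exists s; rewrite // inE s_in orbT.
Qed.

Lemma anc_point_near_hit (a : R) (s : set V) (c : V) (p : 'rV[int]_d) (k : nat) j :
  0 < a -> compact s -> a <= alpha_pt s c -> s (zpt R p) ->
  Num.floor (log2 (width s c)) = k -> width s c < 2 ^+ k.+1 ->
  `|anc_point c (width s c) ord0 j - (p ord0 j)%:~R| < 2 ^+ k.+1 * (2^-1 + a^-1).
Proof.
move=> a_gt0 s_cpt a_le sp fl_k w_lt; set w := width s c.
have [_ [_ r_c]] := anc_point_grid_near c fl_k j.
have c_p : `|c ord0 j - (p ord0 j)%:~R| <= w / a.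
  apply: le_trans (dinf_le_width_div s_cpt a_gt0 a_le sp).
  by have := ler_mx_entry_norm (c - zpt R p) ord0 j; rewrite !mxE.
have w_a : w / a < 2 ^+ k.+1 / a by rewrite ltr_pM2r ?invr_gt0.
have half_S : (2 : R) ^+ k.+1 * 2^-1 = 2 ^+ k by rewrite exprSr mulfK.
have := ler_distD (c ord0 j) (anc_point c w ord0 j) (p ord0 j)%:~R.
by rewrite distrC mulrDr half_S; lra.
Qed.

(* The multiples of 2^(k+1) within 2^(k+1) (1/2 + 1/a) of p_j are the
   (window_start a p k j + i) 2^(k+1) with 0 <= i < floor (2/a + 2). *)
Definition window_start (a : R) (p : 'rV[int]_d) (k : nat) (j : 'I_d) : int :=
  Num.floor ((p ord0 j)%:~R / 2 ^+ k.+1 - (2^-1 + a^-1)) + 1.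

Definition window_point (a : R) (p : 'rV[int]_d) (k : nat) (off : 'I_d -> nat) : V :=
  \row_j (2 ^+ k.+1 * (window_start a p k j + (off j)%:Z)%:~R).

Lemma anc_point_window (a : R) (s : set V) (c : V) (p : 'rV[int]_d) :
  0 < a -> is_object s -> fat a s -> is_center s c -> 1 <= width s c -> s (zpt R p) ->
  exists k : nat, exists2 off : {ffun 'I_d -> 'I_`|Num.floor (2 / a + 2)|},
    Num.floor (log2 (width s c)) = k &
    anc_point c (width s c) = window_point a p k (fun j => off j).
Proof.
move=> a_gt0 [s_cpt _] s_fat [_ c_alpha] w_ge1 sp; set w := width s c.
have a_le : a <= alpha_pt s c by rewrite c_alpha.
have [k [fl_k w_lt]] := floor_log2_nat w_ge1.
have S_gt0 : 0 < (2 : R) ^+ k.+1 by rewrite exprn_gt0.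
have offset j : exists off : 'I_`|Num.floor (2 / a + 2)|,
    anc_point c w ord0 j = 2 ^+ k.+1 * (window_start a p k j + (off : nat)%:Z)%:~R.
  have [m [r_m _]] := anc_point_grid_near c fl_k j.
  have : `|m%:~R - (p ord0 j)%:~R / 2 ^+ k.+1| < 2^-1 + a^-1.
    have -> : m%:~R - (p ord0 j)%:~R / 2 ^+ k.+1 =
        (anc_point c w ord0 j - (p ord0 j)%:~R) / 2 ^+ k.+1.
      by rewrite r_m mulrBl [2 ^+ k.+1 * _]mulrC mulfK ?lt0r_neq0.
    rewrite normrM normfV (gtr0_norm S_gt0) ltr_pdivrMr // mulrC.
    exact: anc_point_near_hit.
  have -> : 2 / a + 2 = 2 * (2^-1 + a^-1) + 1 :> R by field; exact: lt0r_neq0.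
  move=> /floor_window /andP [off_ge0 off_lt].
  have off_bound : (`|m - window_start a p k j|%N < `|Num.floor (2 * (2^-1 + a^-1) + 1)|)%N.
    by rewrite -ltz_nat !gez0_abs // (le_trans off_ge0 (ltW off_lt)).
  by exists (Ordinal off_bound); rewrite r_m /= gez0_abs // subrKC.
have /choice [off off_spec] := offset.
exists k; exists [ffun j => off j] => //.
by apply/rowP => j; rewrite [RHS]mxE ffunE; exact: off_spec.
Qed.

End anc_points.

Theorem theorem3 (R : realType) (d : nat) (a M : R) :
  (0 < d)%N -> 0 < a -> a <= 1 -> 1 < M ->
  forall (ctr : set 'rV[R]_d -> 'rV[R]_d) (objs : seq (set 'rV[R]_d)),
  (forall s, s \in objs ->
     [/\ is_object s, fat a s, is_center s (ctr s)
       & 1 <= width s (ctr s) <= M]) ->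
  forall H : seq 'rV[int]_d, hitting_set objs H ->
  ((size (undup (anc_run ctr objs)))%:R : R) <=
    (((Num.floor (2 / a + 2))%:~R : R) ^+ d * ((Num.floor (log2 M))%:~R + 1))
    * (size (undup H))%:R.
Proof.
move=> _ a_gt0 _ M_gt1 ctr objs objs_ok H H_hits.
set n := size (undup H); set NM := Num.floor (log2 M); set K := Num.floor (2 / a + 2).
have NM_ge0 : 0 <= NM by rewrite floor_ge0 log2_ge0 ?ltW.
have K_ge0 : 0 <= K by rewrite floor_ge0 addr_ge0 ?divr_ge0 ?ltW.
pose decode (t : 'I_n * 'I_`|NM|.+1 * {ffun 'I_d -> 'I_`|K|}) :=
  window_point a (nth 0 (undup H) t.1.1) t.1.2 (fun j => t.2 j).
have run_decoded : {subset undup (anc_run ctr objs) <= codom decode}.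
  move=> r; rewrite mem_undup => /mem_anc_run [s s_in ->].
  have [s_obj s_fat s_ctr /andP[w_ge1 w_leM]] := objs_ok s s_in.
  have [p p_in sp] := H_hits s s_in.
  have [k [off fl_k ->]] := anc_point_window a_gt0 s_obj s_fat s_ctr w_ge1 sp.
  have p_idx : (index p (undup H) < n)%N by rewrite index_mem mem_undup.
  have k_le : (k < `|NM|.+1)%N.
    rewrite ltnS -lez_nat gez0_abs // -fl_k; apply: le_floor.
    by apply: ler_log2 w_leM; exact: lt_le_trans ltr01 w_ge1.
  apply/codomP; exists (Ordinal p_idx, Ordinal k_le, off).
  by rewrite /decode /= nth_index ?mem_undup.
have := uniq_leq_size (undup_uniq _) run_decoded.
rewrite size_codom !card_prod card_ffun !card_ord => size_le.
rewrite -(gez0_abs K_ge0) -(gez0_abs NM_ge0) !pmulrn -natrX natr1 -!natrM ler_nat.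
apply: leq_trans size_le _.
by rewrite [X in (_ <= X)%N]mulnC [(_ ^ d * _)%N]mulnC mulnA.
Qed.
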